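(* Consider the rooted labelled tree (Catalan generating tree) in which the root has label $s\ge 2$ and every node with label $j$ has exactly $j$ children, with labels $2,3,\dots,j+1$. For $m\ge 1$ let $X^{(s)}_m$ be the label of a node chosen uniformly at random among the nodes at depth $m$ (the root having depth $0$). Then $$\mathbf{E}\big[X^{(s)}_m\big]<4+\frac{2s}{m}.$$
   Context: The labels record the number of valid insertion positions: in the tree of $321$-avoiding permutations built by inserting the new maximal entry, a permutation with $j$ valid insertion positions has $j$ children, whose numbers of valid insertion positions are $2,3,\dots,j+1$. *)

From mathcomp Require Import all_boot all_order all_algebra.
Set Implicit Arguments. Unset Strict Implicit. Unset Printing Implicit Defensive.

(* Catalan generating tree with root label s: a node with label j has
   j children with labels 2, 3, ..., j+1 (= iota 2 j).
   [level s m] is the multiset (as a list) of labels of all nodes at depth m. *)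
Fixpoint level (s m : nat) : seq nat :=
  match m with
  | 0 => [:: s]
  | m'.+1 => flatten [seq iota 2 j | j <- level s m']
  end.

Definition expected_label (s m : nat) : rat :=
  ((sumn (level s m))%:R / (size (level s m))%:R)%R.

From mathcomp Require Import all_boot all_order all_algebra.
From mathcomp Require Import zify ring.
Import Order.TTheory GRing.Theory Num.Theory.

(* Splitting off the last child s+2 of a root labelled s+1 shows that the
   numbers of nodes at depth m satisfy the ballot recursion, hence the node
   count at depth m below a root labelled t+1 is (t+1)(2m+t)!/(m!(m+t+1)!).
   Since a node labelled j has j children, the label sum at depth m is the
   node count at depth m+1, so the expected label is the ratio of consecutive
   ballot numbers, (2m+t+2)(2m+t+1)/((m+1)(m+t+2)); it lies below
   4 + 2(t+1)/m by a polynomial inequality with positive coefficients. *)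

Definition next_level (L : seq nat) : seq nat := flatten [seq iota 2 j | j <- L].

Lemma next_level_flatten (ss : seq (seq nat)) :
  next_level (flatten ss) = flatten [seq next_level L | L <- ss].
Proof. by elim: ss => //= L ss IH; rewrite -IH /next_level map_cat flatten_cat. Qed.

Lemma level_subtrees s m : level s m.+1 = flatten [seq level j m | j <- iota 2 s].
Proof.
elim: m => [|m IH]; first by rewrite /= cats0 flatten_seq1.
change (next_level (level s m.+1) = flatten [seq level j m.+1 | j <- iota 2 s]).
by rewrite IH next_level_flatten -map_comp.
Qed.

Lemma level0S m : level 0 m.+1 = [::].
Proof. by rewrite level_subtrees. Qed.

Lemma levelSS s m : level s.+1 m.+1 = level s m.+1 ++ level s.+2 m.
Proof.
rewrite !level_subtrees -[s.+1]addn1 iotaD map_cat flatten_cat /= cats0.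
by rewrite add2n addn1.
Qed.

Lemma sumn_level s m : sumn (level s m) = size (level s m.+1).
Proof.
rewrite /= size_flatten /shape -map_comp.
by elim: (level s m) => //= j L ->; rewrite size_iota.
Qed.

Lemma size_level_closed t m :
  size (level t.+1 m) * m`! * (m + t).+1`! = t.+1 * (2 * m + t)`!.
Proof.
elim: m t => [|m IHm] t; first by rewrite /= fact0 !mul1n muln0 factS.
have fact_m1 : (m.+1)`! = m.+1 * m`! by rewrite factS.
elim: t => [|t IHt].
  have := IHm 1; rewrite levelSS level0S /= !addn0 addn1 => IH1.
  have -> : 2 * m.+1 = (2 * m + 1).+1 by lia.
  rewrite fact_m1 [in RHS]factS; nia.
rewrite levelSS size_cat; move: IHt (IHm t.+2).
have -> : (m.+1 + t).+1 = m + t.+2 by lia.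
have -> : (m.+1 + t.+1).+1 = (m + t.+2).+1 by lia.
have -> : 2 * m.+1 + t = 2 * m + t.+2 by lia.
have -> : 2 * m.+1 + t.+1 = (2 * m + t.+2).+1 by lia.
rewrite fact_m1 !factS; nia.
Qed.

Lemma size_level_gt0 t m : 0 < size (level t.+1 m).
Proof.
rewrite lt0n; apply/eqP => empty.
have := size_level_closed t m; rewrite empty !mul0n.
have := fact_gt0 (2 * m + t); nia.
Qed.

Lemma size_levelS_ratio t m :
  size (level t.+1 m.+1) * (m.+1 * (m + t).+2) =
  size (level t.+1 m) * ((2 * m + t).+2 * (2 * m + t).+1).
Proof.
have fact_pos : 0 < m`! * (m + t).+1`! by rewrite muln_gt0 !fact_gt0.
apply/eqP; rewrite -(eqn_pmul2r fact_pos); apply/eqP.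
have closed_m := size_level_closed t m.
have := size_level_closed t m.+1.
have -> : (m.+1 + t).+1 = (m + t).+2 by lia.
have -> : 2 * m.+1 + t = (2 * m + t).+2 by lia.
rewrite (factS m) (factS (m + t).+1) (factS (2 * m + t).+1) (factS (2 * m + t)).
move=> closed_m1.
transitivity (size (level t.+1 m.+1) * (m.+1 * m`!) * ((m + t).+2 * (m + t).+1`!)).
  by ring.
rewrite closed_m1.
transitivity (size (level t.+1 m) * m`! * (m + t).+1`! * ((2 * m + t).+2 * (2 * m + t).+1)).
  by rewrite closed_m; ring.
by ring.
Qed.

Lemma sumn_level_mul_lt s m :
  0 < s -> sumn (level s m) * m < (4 * m + 2 * s) * size (level s m).
Proof.
case: s => // t _; rewrite sumn_level.
have S0_pos := size_level_gt0 t m.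
have factor_pos : 0 < m.+1 * (m + t).+2 by rewrite muln_gt0.
rewrite -(ltn_pmul2r factor_pos).
have -> : size (level t.+1 m.+1) * m * (m.+1 * (m + t).+2) =
          size (level t.+1 m) * (m * ((2 * m + t).+2 * (2 * m + t).+1)).
  by rewrite mulnAC size_levelS_ratio; ring.
rewrite [X in _ < X]mulnAC [X in _ < X]mulnC ltn_pmul2l //.
nia.
Qed.

Theorem mainTheorem6 (s m : nat) (hs : (2 <= s)%N) (hm : (1 <= m)%N) :
  (expected_label s m < 4%:R + 2%:R * s%:R / m%:R)%R.
Proof.
have m_pos : (0 < m%:R :> rat)%R by rewrite ltr0n.
have size_pos : (0 < (size (level s m))%:R :> rat)%R.
  by case: s hs => // t _; rewrite ltr0n size_level_gt0.
rewrite /expected_label ltr_pdivrMr // -(ltr_pM2r m_pos).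
have -> : ((4%:R + 2%:R * s%:R / m%:R) * (size (level s m))%:R * m%:R =
          ((4 * m + 2 * s) * size (level s m))%N%:R :> rat)%R.
  by rewrite natrM natrD !natrM; field; rewrite pnatr_eq0 -lt0n.
by rewrite -natrM ltr_nat sumn_level_mul_lt // ltnW.
Qed.
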